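(* For $n\ge 2$ let $$S_n^{(1)}(t):=\sum_{T\in\mathfrak{D}\mathfrak{T}^{\oplus}_n}t^{n_\ominus(T)},\qquad S_n^{(2)}(t):=\sum_{T\in\mathfrak{D}\mathfrak{T}^{\ominus}_n}t^{n_\ominus(T)},$$ and set $S_1^{(1)}(t)=S_1^{(2)}(t)=1$. Let $S_n(t)=\sum_{\pi\in\mathfrak{S}_n(2413,3142)}t^{\mathrm{des}(\pi)}$. Then for $n\geq2$, $$S_n^{(1)}(t)=\sum_{j=1}^{n-1}S_j(t)S_{n-j}^{(2)}(t)\qquad\text{and}\qquad S_n^{(2)}(t)=t\sum_{j=1}^{n-1}S_j(t)S_{n-j}^{(1)}(t).$$
   Context: $\mathfrak{S}_n(2413,3142)$ is the set of permutations of $[n]$ avoiding the patterns $2413$ and $3142$; $\mathrm{des}(\pi)=\#\{i\in[n-1]:\pi_i>\pi_{i+1}\}$. A binary tree is either empty or a root with a left and a right subtree, both binary trees. A right chain is a maximal sequence of nodes $v_1,\dots,v_l$ with $v_1$ the root or a left child and each $v_{j+1}$ the right child of $v_j$. A di-sk tree is a binary tree with nodes labelled $\oplus$ or $\ominus$ such that labels alternate along every right chain; $\mathfrak{D}\mathfrak{T}_n$ is the set of di-sk trees with $n-1$ nodes, $n_\ominus(T)$ the number of nodes labelled $\ominus$, and $\mathfrak{D}\mathfrak{T}^{\oplus}_n$ (resp. $\mathfrak{D}\mathfrak{T}^{\ominus}_n$) the set of trees in $\mathfrak{D}\mathfrak{T}_n$ whose root is labelled $\oplus$ (resp. $\ominus$).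 It is known that $S_n(t)=\sum_{T\in\mathfrak{D}\mathfrak{T}_n}t^{n_\ominus(T)}$. *)

From HB Require Import structures.
From mathcomp Require Import all_boot all_order all_algebra all_fingroup.
Set Implicit Arguments. Unset Strict Implicit. Unset Printing Implicit Defensive.
Import GRing.Theory.
Local Open Scope ring_scope.

(* s : 'S_n is read as the word s(0) s(1) ... s(n-1) (positions and values
   shifted down by one). *)

Definition contains2413 n (s : 'S_n) : bool :=
  [exists a : 'I_n, exists b : 'I_n, exists c : 'I_n, exists d : 'I_n,
    [&& (a < b)%N, (b < c)%N, (c < d)%N,
        (s c < s a)%N, (s a < s d)%N & (s d < s b)%N]].

Definition contains3142 n (s : 'S_n) : bool :=
  [exists a : 'I_n, exists b : 'I_n, exists c : 'I_n, exists d : 'I_n,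
    [&& (a < b)%N, (b < c)%N, (c < d)%N,
        (s b < s d)%N, (s d < s a)%N & (s a < s c)%N]].

Definition avoids_2413_3142 n (s : 'S_n) : bool :=
  ~~ contains2413 s && ~~ contains3142 s.

Definition des n (s : 'S_n) : nat :=
  #|[set i : 'I_n | [exists j : 'I_n, (val j == (val i).+1) && (s j < s i)%N]]|.

Definition Sperm (n : nat) : {poly int} :=
  \sum_(s : 'S_n | avoids_2413_3142 s) 'X ^+ des s.

(* label true = (+), label false = (-) *)
Inductive btree : Type :=
| Leaf : btree
| Node : bool -> btree -> btree -> btree.

Fixpoint nnodes (T : btree) : nat :=
  match T with Leaf => 0 | Node _ l r => (nnodes l + nnodes r).+1 end.

Fixpoint nminus (T : btree) : nat :=
  match T with
  | Leaf => 0
  | Node b l r => (~~ b : nat) + nminus l + nminus r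
  end.

(* labels alternate along every right chain: a node and its right child
   (when present) carry different labels *)
Fixpoint disk (T : btree) : bool :=
  match T with
  | Leaf => true
  | Node b l r =>
      [&& disk l, disk r &
          match r with Leaf => true | Node b' _ _ => b' != b end]
  end.

Definition root_label (T : btree) : option bool :=
  match T with Leaf => None | Node b _ _ => Some b end.

(* all binary trees with exactly k nodes (fuel f >= k) *)
Fixpoint trees_fuel (f k : nat) : seq btree :=
  match f with
  | 0 => if k == 0%N then [:: Leaf] else [::]
  | f'.+1 =>
      match k with
      | 0 => [:: Leaf]
      | k'.+1 =>
          flatten [seq flatten [seq flatten [seq [seq Node b L R | b <- [:: true; false]]
                                              | R <- trees_fuel f' (k' - i)]
                               | L <- trees_fuel f' i]
                  | i <- iota 0 k'.+1]
      end
  end.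

Definition trees_of_size (k : nat) : seq btree := trees_fuel k k.

(* sum over di-sk trees with n-1 nodes and root labelled lab of t^{n_-(T)};
   by convention equal to 1 for n = 1 *)
Definition Stree (lab : bool) (n : nat) : {poly int} :=
  if n == 1%N then 1 else
  \sum_(T <- trees_of_size n.-1 | disk T && (root_label T == Some lab))
     'X ^+ nminus T.

Definition S1 := Stree true.
Definition S2 := Stree false.

(* The permutations avoiding 2413 and 3142 are the separable ones: such a word of
   length at least 2 is a direct sum or a skew sum of two shorter ones, never both,
   and direct and skew sums of separable words are separable.  Cutting a direct sum
   after its first block writes it uniquely as a direct-sum-indecomposable word
   followed by an arbitrary one, and descents add up; for a skew sum the junction
   contributes one more descent.  Thus the descent polynomials of direct-sum- and
   skew-sum-indecomposable separable permutations obey the recursions of S^(2) and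
   S^(1) obtained by cutting a di-sk tree at its root (left subtree arbitrary, right
   subtree continuing the alternating chain), so by induction S_n is the sum over
   all di-sk trees with n - 1 nodes.  The theorem is then the root decomposition of
   di-sk trees. *)

From mathcomp Require Import all_boot all_order all_algebra all_fingroup.
From mathcomp Require Import zify.

Set Implicit Arguments.
Unset Strict Implicit.
Unset Printing Implicit Defensive.

(** * Pattern occurrences in words *)

Lemma subseq_cons_drop (l s : seq nat) i k : i < size l -> k <= i ->
  subseq s (drop i.+1 l) -> subseq (nth 0 l i :: s) (drop k l).
Proof.
move=> Hi Hk Hs.
rewrite -(cat_take_drop (i - k) (drop k l)) drop_drop subnK // (drop_nth 0 Hi).
by apply: subseq_trans (suffix_subseq _ _); rewrite /= eqxx.
Qed.

Lemma subseq_cons_dropE (x : nat) s l k : subseq (x :: s) (drop k l) ->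
  exists i, [/\ k <= i, i < size l, nth 0 l i = x & subseq s (drop i.+1 l)].
Proof.
elim: l k => [|y l IH] [|k] //=.
- case: eqP => [-> Hs|_ Hs]; first by exists 0; rewrite ?drop0.
  rewrite -[l]drop0 in Hs; have [i [_ Hi <- {}Hs]] := IH 0 Hs.
  by exists i.+1.
- by move/IH => [i [Hki Hi Hx Hs]]; exists i.+1.
Qed.

Lemma subseq4_nth (l : seq nat) a b c d : a < b -> b < c -> c < d -> d < size l ->
  subseq [:: nth 0 l a; nth 0 l b; nth 0 l c; nth 0 l d] l.
Proof.
move=> ab bc cd dl; rewrite -[l in subseq _ l]drop0.
do 3 (apply: subseq_cons_drop => //; first lia).
by apply: subseq_cons_drop; rewrite ?sub0seq //; lia.
Qed.

Lemma subseq4_nthE (l : seq nat) x1 x2 x3 x4 : subseq [:: x1; x2; x3; x4] l ->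
  exists a b c d, [/\ a < b, b < c, c < d & d < size l] /\
    [/\ nth 0 l a = x1, nth 0 l b = x2, nth 0 l c = x3 & nth 0 l d = x4].
Proof.
rewrite -[l in subseq _ l]drop0 => H.
have [a [_ _ E1 {}H]] := subseq_cons_dropE H.
have [b [ab _ E2 {}H]] := subseq_cons_dropE H.
have [c [bc _ E3 {}H]] := subseq_cons_dropE H.
have [d [cd dl E4 _]] := subseq_cons_dropE H.
by exists a, b, c, d.
Qed.

Section Occurrence.

Variable R : nat -> nat -> nat -> nat -> bool.

Definition occurs (l : seq nat) : bool :=
  [exists a : 'I_(size l), exists b : 'I_(size l), exists c : 'I_(size l),
   exists d : 'I_(size l),
     [&& a < b, b < c, c < d & R (nth 0 l a) (nth 0 l b) (nth 0 l c) (nth 0 l d)]].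

Lemma occursP (l : seq nat) :
  reflect (exists a b c d, subseq [:: a; b; c; d] l /\ R a b c d) (occurs l).
Proof.
apply: (iffP existsP) => [[a /existsP[b /existsP[c /existsP[d]]]]|].
  case/and4P=> ab bc cd HR.
  exists (nth 0 l a), (nth 0 l b), (nth 0 l c), (nth 0 l d).
  by rewrite subseq4_nth ?ltn_ord.
move=> [x1 [x2 [x3 [x4 [/subseq4_nthE[a [b [c [d [[ab bc cd dl] [<- <- <- <-]]]]]] HR]]]]].
have al : a < size l by lia.
have bl : b < size l by lia.
have cl : c < size l by lia.
exists (Ordinal al); apply/existsP; exists (Ordinal bl); apply/existsP.
by exists (Ordinal cl); apply/existsP; exists (Ordinal dl); rewrite /= ab bc cd.
Qed.

Lemma occurs_subseq (l1 l2 : seq nat) : subseq l1 l2 -> occurs l1 -> occurs l2.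
Proof.
move=> l12 /occursP[a [b [c [d [Hs HR]]]]]; apply/occursP.
by exists a, b, c, d; rewrite (subseq_trans Hs l12).
Qed.

Lemma occurs_small (l : seq nat) : size l < 4 -> ~~ occurs l.
Proof. by move=> Hl; apply/occursP => -[a [b [c [d [/size_subseq /= H _]]]]]; lia. Qed.

End Occurrence.

Lemma occurs_map R R' f (l : seq nat) :
    (forall a b c d, R (f a) (f b) (f c) (f d) = R' a b c d) ->
  occurs R (map f l) = occurs R' l.
Proof.
move=> RR'; apply/occursP/occursP => [[a [b [c [d [/subseqP[m _ E] HR]]]]]|].
  have Hs : subseq (mask m l) l by exact: mask_subseq.
  move: E Hs HR; rewrite -map_mask.
  case: (mask m l) => [|a' [|b' [|c' [|d' [|? ?]]]]] //= [-> -> -> ->] Hs HR.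
  by exists a', b', c', d'; rewrite -RR'.
move=> [a [b [c [d [Hs HR]]]]].
by exists (f a), (f b), (f c), (f d); rewrite RR' (map_subseq f Hs).
Qed.

Definition word n (s : 'S_n) : seq nat := [seq val (s i) | i <- enum 'I_n].

Lemma size_word n (s : 'S_n) : size (word s) = n.
Proof. by rewrite size_map size_enum_ord. Qed.

Lemma nth_word n (s : 'S_n) (i : 'I_n) : nth 0 (word s) i = s i.
Proof. by rewrite (nth_map i) ?size_enum_ord // nth_ord_enum. Qed.

Lemma occurs_word (R : nat -> nat -> nat -> nat -> bool) n (s : 'S_n) :
  [exists a : 'I_n, exists b : 'I_n, exists c : 'I_n, exists d : 'I_n,
     [&& a < b, b < c, c < d & R (s a) (s b) (s c) (s d)]] = occurs R (word s).
Proof.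
apply/idP/occursP => [/existsP[a /existsP[b /existsP[c /existsP[d]]]]|].
  case/and4P=> ab bc cd HR; exists (s a : nat), (s b : nat), (s c : nat), (s d : nat).
  by split=> //; rewrite -!nth_word subseq4_nth ?size_word.
move=> [x1 [x2 [x3 [x4 [/subseq4_nthE[a [b [c [d [[ab bc cd]]]]]]]]]]].
rewrite size_word => dn [E1 E2 E3 E4] HR.
have an : a < n by lia.
have bn : b < n by lia.
have cn : c < n by lia.
move: E1 E2 E3 E4; rewrite -[a]/(val (Ordinal an)) -[b]/(val (Ordinal bn)).
rewrite -[c]/(val (Ordinal cn)) -[d]/(val (Ordinal dn)) !nth_word => E1 E2 E3 E4.
apply/existsP; exists (Ordinal an); apply/existsP; exists (Ordinal bn).
apply/existsP; exists (Ordinal cn); apply/existsP; exists (Ordinal dn).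
by rewrite /= ab bc cd E1 E2 E3 E4.
Qed.

Definition pat2413 (a b c d : nat) := [&& c < a, a < d & d < b].
Definition pat3142 (a b c d : nat) := [&& b < d, d < a & a < c].

Definition separable (l : seq nat) := ~~ occurs pat2413 l && ~~ occurs pat3142 l.

Lemma separable_word n (s : 'S_n) : avoids_2413_3142 s = separable (word s).
Proof. by rewrite /separable -!occurs_word. Qed.

Lemma separable_subseq (l1 l2 : seq nat) : subseq l1 l2 -> separable l2 -> separable l1.
Proof.
move=> l12 /andP[n1 n2]; apply/andP; split; apply: contra (occurs_subseq l12) _ => //.
Qed.

Lemma separable_small (l : seq nat) : size l < 4 -> separable l.
Proof. by move=> Hl; rewrite /separable !occurs_small. Qed.

Lemma separable_shift k (l : seq nat) : separable (map (addn k) l) = separable l.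
Proof.
rewrite /separable (@occurs_map _ pat2413) ?(@occurs_map _ pat3142) // => a b c d;
  by rewrite /pat2413 /pat3142 !ltn_add2l.
Qed.

(** * Direct and skew sums *)

Definition below (A B : seq nat) := all (fun x => all (fun y => x < y) B) A.
Definition above (A B : seq nat) := below B A.

Lemma belowP (A B : seq nat) :
  reflect (forall x y : nat, x \in A -> y \in B -> x < y) (below A B).
Proof.
apply: (iffP allP) => [H x y /H /allP|H x Ha]; first exact.
by apply/allP => y; apply: H.
Qed.

Lemma below_catr (A B C : seq nat) : below A (B ++ C) = below A B && below A C.
Proof. by rewrite /below -all_predI; apply: eq_all => x; rewrite /= all_cat. Qed.

Lemma below_catl (A B C : seq nat) : below (A ++ B) C = below A C && below B C.
Proof. exact: all_cat. Qed.

Lemma below_shift k (A B : seq nat) :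
  below (map (addn k) A) (map (addn k) B) = below A B.
Proof.
rewrite /below all_map; apply: eq_all => x /=.
by rewrite all_map; apply: eq_all => y /=; rewrite ltn_add2l.
Qed.

Lemma below_subset (A A' B B' : seq nat) :
  {subset A' <= A} -> {subset B' <= B} -> below A B -> below A' B'.
Proof. by move=> AA' BB' /belowP AB; apply/belowP => x y /AA' + /BB'; apply: AB. Qed.

Lemma subseq_catE (s A B : seq nat) : subseq s (A ++ B) ->
  exists i, subseq (take i s) A /\ subseq (drop i s) B.
Proof.
case/subseqP=> m sm ->; rewrite -[m](cat_take_drop (size A)) mask_cat; last first.
  by rewrite size_takel // sm size_cat leq_addr.
exists (size (mask (take (size A) m) A)).
by rewrite take_size_cat ?drop_size_cat // !mask_subseq.
Qed.

Section PatternsInSums.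

Variables (P : rel (seq nat)) (R : nat -> nat -> nat -> nat -> bool).
Hypothesis P_subset : forall A A' B B' : seq nat,
  {subset A' <= A} -> {subset B' <= B} -> P A B -> P A' B'.
Hypothesis R_indecomposable : forall a b c d i, 0 < i < 4 -> R a b c d ->
  ~~ P (take i [:: a; b; c; d]) (drop i [:: a; b; c; d]).

Lemma occurs_cat (A B : seq nat) : P A B -> occurs R (A ++ B) = occurs R A || occurs R B.
Proof.
move=> PAB; apply/idP/orP => [/occursP[a [b [c [d [/subseq_catE[i [HA HB]] HR]]]]]|].
  have [i0|i_gt0] := posnP i.
    by right; apply/occursP; exists a, b, c, d; rewrite i0 drop0 in HB.
  have [i4|i_lt4] := leqP 4 i.
    by left; apply/occursP; exists a, b, c, d; rewrite take_oversize in HA.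
  have i_mid : 0 < i < 4 by rewrite i_gt0 i_lt4.
  have /negP[] := R_indecomposable i_mid HR.
  exact: P_subset (mem_subseq HA) (mem_subseq HB) PAB.
by case=> H; apply: (occurs_subseq _ H); rewrite ?prefix_subseq ?suffix_subseq.
Qed.

End PatternsInSums.

Lemma separable_cat_below (A B : seq nat) :
  below A B -> separable (A ++ B) = separable A && separable B.
Proof.
move=> AB; rewrite /separable !(occurs_cat below_subset) //.
  by case: (occurs _ A); case: (occurs _ B); case: (occurs _ A); case: (occurs _ B).
all: by move=> a b c d [|[|[|[|i]]]] //= _; rewrite /pat2413 /pat3142 /below /=; lia.
Qed.

Lemma separable_cat_above (A B : seq nat) :
  above A B -> separable (A ++ B) = separable A && separable B.
Proof.
have above_subset := fun A A' B B' AA' BB' => @below_subset B B' A A' BB' AA'.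
move=> AB; rewrite /separable !(occurs_cat above_subset) //.
  by case: (occurs _ A); case: (occurs _ B); case: (occurs _ A); case: (occurs _ B).
all: by move=> a b c d [|[|[|[|i]]]] //= _; rewrite /pat2413 /pat3142 /above /below /=; lia.
Qed.

Section Decomposition.

Variable P : rel (seq nat).

Definition split_at (l : seq nat) j := P (take j l) (drop j l).
Definition decomposable (l : seq nat) := has (split_at l) (iota 1 (size l).-1).
Definition first_split (l : seq nat) := (find (split_at l) (iota 1 (size l).-1)).+1.

(* [first_split l] is the length of the first block of [l], meaningless unless
   [decomposable l]. *)

Lemma first_split_bounds (l : seq nat) :
  decomposable l -> 0 < first_split l < size l.
Proof. by rewrite /decomposable has_find size_iota /first_split; lia. Qed.

Lemma split_at_first_split (l : seq nat) : decomposable l -> split_at l (first_split l).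
Proof.
move=> dl; have := first_split_bounds dl; rewrite /first_split => f_mid.
by have := nth_find 0 dl; rewrite nth_iota ?add1n; last lia.
Qed.

Lemma decomposableP (l : seq nat) :
  reflect (exists A B : seq nat, [/\ l = A ++ B, 0 < size A, 0 < size B & P A B]) (decomposable l).
Proof.
apply: (iffP idP) => [dl | [A [B [-> A0 B0 PAB]]]].
  move: (first_split_bounds dl) (split_at_first_split dl).
  move: (first_split l) => j j_mid Pj; exists (take j l), (drop j l).
  have j_le : j <= size l by lia.
  by rewrite cat_take_drop size_takel // size_drop subn_gt0; split=> //; lia.
apply/hasP; exists (size A); last by rewrite /split_at take_size_cat ?drop_size_cat.
by rewrite mem_iota size_cat; lia.
Qed.

Lemma decomposable_first_split (l : seq nat) j : 0 < j < size l ->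
  decomposable l && (first_split l == j) =
  split_at l j && all (predC (split_at l)) (iota 1 j.-1).
Proof.
move=> j_mid; rewrite /decomposable /first_split; set s := iota 1 _.
have sj : j.-1 < size s by rewrite size_iota; lia.
have nth_s i : i < size s -> nth 0 s i = i.+1.
  by rewrite size_iota => i_lt; rewrite nth_iota.
apply/idP/andP => [/andP[s_has /eqP <-]|[Pj /allP Pk]].
  have f_lt : find (split_at l) s < size s by rewrite -has_find.
  rewrite -{1}nth_s // nth_find //; split=> //; apply/allP => k; rewrite mem_iota => k_mid.
  have -> : k = nth 0 s k.-1 by rewrite nth_s; lia.
  by rewrite /= before_find //; lia.
have s_has : has (split_at l) s.
  by apply/(has_nthP 0); exists j.-1 => //; rewrite nth_s ?prednK //; lia.
have f_lt : find (split_at l) s < size s by rewrite -has_find.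
rewrite s_has; apply/eqP; case: (ltngtP (find (split_at l) s).+1 j) => // [lt_fj | gt_fj].
  have /negP[] : predC (split_at l) (find (split_at l) s).+1.
    by apply: Pk; rewrite mem_iota; lia.
  by rewrite -nth_s // nth_find.
have /(before_find 0) : j.-1 < find (split_at l) s by lia.
by rewrite nth_s ?prednK ?Pj //; lia.
Qed.

Lemma decomposable_map f (l : seq nat) :
    (forall A B : seq nat, P (map f A) (map f B) = P A B) ->
  decomposable (map f l) = decomposable l.
Proof.
move=> P_map; rewrite /decomposable size_map; apply: eq_has => j.
by rewrite /split_at -map_take -map_drop P_map.
Qed.

Hypothesis P_catr : forall C D B : seq nat, P (C ++ D) B -> P C (D ++ B) = P C D.

Lemma first_split_cat (s t : seq nat) : 0 < size s -> 0 < size t -> P s t ->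
  decomposable (s ++ t) && (first_split (s ++ t) == size s) = ~~ decomposable s.
Proof.
move=> s0 t0 Pst; rewrite decomposable_first_split; last first.
  by rewrite size_cat; lia.
rewrite {1}/split_at take_size_cat ?drop_size_cat // Pst -all_predC /=.
apply: eq_in_all => k; rewrite mem_iota => k_mid /=; congr negb.
have k_lt : k < size s by lia.
by rewrite /split_at take_cat drop_cat k_lt P_catr // cat_take_drop.
Qed.

Lemma first_block (l : seq nat) : decomposable l ->
  exists A B : seq nat, [/\ l = A ++ B, 0 < size A, 0 < size B, P A B & ~~ decomposable A].
Proof.
move=> dl; have /andP[j_gt0 j_lt] := first_split_bounds dl.
have Plj := split_at_first_split dl.
have sA : size (take (first_split l) l) = first_split l by rewrite size_takel // ltnW.
have sB : 0 < size (drop (first_split l) l) by rewrite size_drop subn_gt0.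
exists (take (first_split l) l), (drop (first_split l) l).
rewrite cat_take_drop sA; split=> //.
by rewrite -(first_split_cat (t := drop (first_split l) l)) ?sA // cat_take_drop dl eqxx.
Qed.

End Decomposition.

(** * Separable words decompose *)

Lemma below_catr_split (C D B : seq nat) :
  below (C ++ D) B -> below C (D ++ B) = below C D.
Proof. by rewrite below_catl below_catr => /andP[-> _]; rewrite andbT. Qed.

Lemma above_catr_split (C D B : seq nat) :
  above (C ++ D) B -> above C (D ++ B) = above C D.
Proof. by rewrite /above below_catl below_catr => /andP[-> _]; rewrite andbT. Qed.

Lemma head_last_cat (A B : seq nat) : 0 < size A -> 0 < size B ->
  nth 0 (A ++ B) 0 \in A /\ last 0 (A ++ B) \in B.
Proof.
case: A => [|a A] // _; case: B => [|b B] // _.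
by rewrite last_cat /= !inE eqxx; split=> //; apply: mem_last.
Qed.

Lemma decomposable_below_above (l : seq nat) :
  decomposable below l -> ~~ decomposable above l.
Proof.
case/decomposableP=> A [B [-> A0 B0 /belowP AB]].
apply/decomposableP=> -[C [D [E C0 D0 /belowP DC]]].
have [hA lB] := head_last_cat A0 B0; have [hC lD] := head_last_cat C0 D0.
rewrite E in hA lB; have := AB _ _ hA lB; have := DC _ _ lD hC; lia.
Qed.

Lemma exists_above_in (L U : seq nat) (a x : nat) : below L U -> 0 < size U ->
  (a \in L) || (a \in U) -> x < a -> exists2 u : nat, u \in U & x < u.
Proof.
move=> /belowP LU U0 /orP[aL | aU] xa; last by exists a.
by exists (nth 0 U 0); rewrite ?mem_nth //; apply: ltn_trans xa (LU _ _ aL (mem_nth 0 U0)).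
Qed.

Lemma exists_below_in (L U : seq nat) (a x : nat) : below L U -> 0 < size L ->
  (a \in L) || (a \in U) -> a < x -> exists2 v : nat, v \in L & v < x.
Proof.
move=> /belowP LU L0 /orP[aL | aU] ax; first by exists a.
by exists (nth 0 L 0); rewrite ?mem_nth //; apply: ltn_trans (LU _ _ (mem_nth 0 L0) aU) ax.
Qed.

Lemma subseq4_mem_cat (A1 A2 A3 A4 : seq nat) (a b c d : nat) :
  a \in A1 -> b \in A2 -> c \in A3 -> d \in A4 ->
  subseq [:: a; b; c; d] (A1 ++ A2 ++ A3 ++ A4).
Proof.
move=> aA bA cA dA; rewrite -[[:: a; b; c; d]]/([:: a] ++ [:: b] ++ [:: c] ++ [:: d]).
by rewrite !cat_subseq ?sub1seq.
Qed.

Lemma separable_extend_below (A B : seq nat) (x : nat) :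
  below A B -> 0 < size A -> 0 < size B -> x \notin A ->
  (1 < size A -> decomposable above A) -> separable (A ++ B ++ [:: x]) ->
  decomposable below (A ++ B ++ [:: x]) || decomposable above (A ++ B ++ [:: x]).
Proof.
move=> AB A0 B0 xA A_above sep; have /belowP AB' := AB.
have [Ax | /allPn[a1 a1A /negP a1x]] := boolP (all (fun a => a < x) A).
  apply/orP; left; apply/decomposableP; exists A, (B ++ [:: x]).
  rewrite size_cat addn1 below_catr AB; split=> //.
  by apply/belowP => a y aA; rewrite inE => /eqP->; apply: (allP Ax).
have [xA' | /allPn[a2 a2A /negP xa2]] := boolP (all (fun a => x < a) A).
  apply/orP; right; apply/decomposableP; exists (A ++ B), [:: x].
  rewrite catA size_cat /above; split=> //; first by rewrite addn_gt0 A0.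
  apply/belowP => y z; rewrite inE mem_cat => /eqP-> /orP[zA | zB]; first exact: (allP xA').
  exact: ltn_trans (allP xA' _ (mem_nth 0 A0)) (AB' _ _ (mem_nth 0 A0) zB).
(* Otherwise [x] lies strictly between two letters of [A], which is then a skew sum
   [C ++ D]: a letter of [C] above [x], a letter of [D] below [x], the first letter
   of [B] and [x] form 3142. *)
have x_a1 : x < a1 by case: ltngtP a1x (memPn xA a1 a1A) => // ->; rewrite eqxx.
have a2_x : a2 < x by case: ltngtP xa2 (memPn xA a2 a2A) => // ->; rewrite eqxx.
have /A_above/decomposableP[C [D [EA C0 D0 DC]]] : 1 < size A.
  case: A {AB AB' A0 A_above sep} a1A a2A xA => [|a [|a' A]] //=.
  by rewrite !inE => /eqP E1 /eqP E2; move: x_a1 a2_x; rewrite E1 E2; lia.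
move: a1A a2A; rewrite EA !mem_cat ![(_ \in C) || _]orbC => a1A a2A.
have [c cC xc] := exists_above_in DC C0 a1A x_a1.
have [d dD dx] := exists_below_in DC D0 a2A a2_x.
have cb : c < nth 0 B 0 by apply: AB'; rewrite ?EA ?mem_cat ?cC ?mem_nth.
suff: occurs pat3142 (A ++ B ++ [:: x]) by case/andP: sep => _ /negP.
apply/occursP; exists c, d, (nth 0 B 0), x.
by rewrite EA -catA subseq4_mem_cat ?mem_nth ?inE // /pat3142 dx xc cb.
Qed.

Lemma separable_extend_above (A B : seq nat) (x : nat) :
  above A B -> 0 < size A -> 0 < size B -> x \notin A ->
  (1 < size A -> decomposable below A) -> separable (A ++ B ++ [:: x]) ->
  decomposable below (A ++ B ++ [:: x]) || decomposable above (A ++ B ++ [:: x]).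
Proof.
move=> BA A0 B0 xA A_below sep; rewrite /above in BA; have /belowP BA' := BA.
have [xA' | /allPn[a1 a1A /negP xa1]] := boolP (all (fun a => x < a) A).
  apply/orP; right; apply/decomposableP; exists A, (B ++ [:: x]).
  rewrite size_cat addn1 /above below_catl BA; split=> //.
  by apply/belowP => y a; rewrite inE => /eqP-> aA; apply: (allP xA').
have [Ax | /allPn[a2 a2A /negP a2x]] := boolP (all (fun a => a < x) A).
  apply/orP; left; apply/decomposableP; exists (A ++ B), [:: x].
  rewrite catA size_cat; split=> //; first by rewrite addn_gt0 A0.
  apply/belowP => z y; rewrite inE mem_cat => /orP[zA | zB] /eqP->; first exact: (allP Ax).
  exact: ltn_trans (BA' _ _ zB (mem_nth 0 A0)) (allP Ax _ (mem_nth 0 A0)).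
(* As above, with the roles of the two sums exchanged, now producing 2413. *)
have a1_x : a1 < x by case: ltngtP xa1 (memPn xA a1 a1A) => // ->; rewrite eqxx.
have x_a2 : x < a2 by case: ltngtP a2x (memPn xA a2 a2A) => // ->; rewrite eqxx.
have /A_below/decomposableP[C [D [EA C0 D0 CD]]] : 1 < size A.
  case: A {BA BA' A0 A_below sep} a1A a2A xA => [|a [|a' A]] //=.
  by rewrite !inE => /eqP E1 /eqP E2; move: a1_x x_a2; rewrite E1 E2; lia.
move: a1A a2A; rewrite EA !mem_cat => a1A a2A.
have [c cC cx] := exists_below_in CD C0 a1A a1_x.
have [d dD xd] := exists_above_in CD D0 a2A x_a2.
have bc : nth 0 B 0 < c by apply: BA'; rewrite ?EA ?mem_cat ?cC ?mem_nth.
suff: occurs pat2413 (A ++ B ++ [:: x]) by case/andP: sep => /negP.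
apply/occursP; exists c, d, (nth 0 B 0), x.
by rewrite EA -catA subseq4_mem_cat ?mem_nth ?inE // /pat2413 bc cx xd.
Qed.

Lemma separable_decomposable (l : seq nat) : uniq l -> separable l -> 1 < size l ->
  decomposable below l || decomposable above l.
Proof.
have [n] := ubnP (size l); elim: n l => // n IH l.
case/lastP: l => // l' x; rewrite size_rcons ltnS rcons_uniq => l'_lt /andP[xl' ul'] sep l'_gt0.
have IH' (A : seq nat) : subseq A l' -> 1 < size A -> decomposable below A || decomposable above A.
  move=> Al' A_gt1; apply: IH => //; first exact: leq_ltn_trans (size_subseq Al') l'_lt.
    exact: subseq_uniq Al' ul'.
  by apply: separable_subseq sep; apply: subseq_trans Al' (subseq_rcons _ _).
have [l'_gt1 | ] := ltnP 1 (size l'); last first.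
  case: l' IH' l'_lt ul' sep l'_gt0 xl' => [|y [|? ?]] //= _ _ _ _ _; rewrite inE => xy _.
  rewrite /decomposable /split_at /above /below /= !andbT !orbF.
  by case: (ltngtP y x) xy => // ->; rewrite eqxx.
rewrite -cats1; case/orP: (IH' l' (subseq_refl _) l'_gt1) => dl.
  have [A [B [El' A0 B0 AB Aind]]] := first_block below_catr_split dl; subst l'.
  rewrite -catA; apply: separable_extend_below; rewrite ?catA ?cats1 //.
    by apply: contraNN xl'; rewrite mem_cat => ->.
  by move=> A_gt1; have := IH' A (prefix_subseq _ _) A_gt1; rewrite (negbTE Aind).
have [A [B [El' A0 B0 BA Aind]]] := first_block above_catr_split dl; subst l'.
rewrite -catA; apply: separable_extend_above; rewrite ?catA ?cats1 //.
  by apply: contraNN xl'; rewrite mem_cat => ->.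
by move=> A_gt1; have := IH' A (prefix_subseq _ _) A_gt1; rewrite (negbTE Aind) orbF.
Qed.

Lemma below_size (L U : seq nat) : below L U -> uniq L -> all (leq (size L)) U.
Proof.
move=> /belowP LU uL; apply/allP => u uU /=; rewrite -(size_iota 0 u).
by apply: uniq_leq_size => // x xL; rewrite mem_iota /= LU.
Qed.

Lemma iota_glue m n : iota 0 (m + n) = iota 0 m ++ map (addn m) (iota 0 n).
Proof. by rewrite iotaD -iotaDl addn0. Qed.

Lemma perm_iota_glue (s t : seq nat) :
  perm_eq (s ++ map (addn (size s)) t) (iota 0 (size s + size t)) =
  perm_eq s (iota 0 (size s)) && perm_eq t (iota 0 (size t)).
Proof.
rewrite iota_glue; apply/idP/andP => [st_perm | [s_perm t_perm]]; last first.
  by rewrite perm_cat // perm_map.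
have low := perm_filter (fun x => x < size s) st_perm.
have high_low (u : seq nat) : [seq x <- map (addn (size s)) u | x < size s] = [::].
  by apply/eqP; rewrite -size_eq0 size_filter -leqn0 leqNgt -has_count;
     apply/hasPn => _ /mapP[y _ ->]; rewrite -leqNgt leq_addr.
have iota_low : [seq x <- iota 0 (size s) | x < size s] = iota 0 (size s).
  by apply/all_filterP/allP => x; rewrite mem_iota.
rewrite !filter_cat !high_low !cats0 iota_low in low.
have s_low : all (fun x => x < size s) s.
  by rewrite all_count -size_filter (perm_size low) size_iota.
have s_perm : perm_eq s (iota 0 (size s)) by move/all_filterP: s_low low => ->.
split=> //; move: st_perm; rewrite (permPl (perm_cat s_perm (perm_refl _))) perm_cat2l.
exact: (perm_map_inj (@addnI (size s))).
Qed.

Fixpoint desw (l : seq nat) : nat :=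
  if l is x :: t then (if t is y :: _ then y < x else false) + desw t else 0.

Lemma desw_cons x (t : seq nat) :
  desw (x :: t) = (if t is y :: _ then y < x else false) + desw t.
Proof. by []. Qed.

Lemma desw_cat (s t : seq nat) : 0 < size s -> 0 < size t ->
  desw (s ++ t) = desw s + (head 0 t < last 0 s) + desw t.
Proof.
case: s => [|x s] // _; case: t => [|y t] // _.
elim: s x => [|z s IH] x; first by rewrite /= addn0.
by rewrite cat_cons desw_cons IH [desw (x :: z :: s)]desw_cons /= !addnA.
Qed.

Lemma desw_shift k (l : seq nat) : desw (map (addn k) l) = desw l.
Proof.
elim: l => [|x t IH] //; rewrite map_cons !desw_cons IH.
by case: t {IH} => //= y t; rewrite ltn_add2l.
Qed.

Lemma desw_nth (l : seq nat) :
  desw l = \sum_(0 <= i < size l) ((i.+1 < size l) && (nth 0 l i.+1 < nth 0 l i)).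
Proof.
elim: l => [|x t IH]; first by rewrite big_nil.
rewrite /= IH big_nat_recl //=; congr addn.
by case: t {IH} => [|y t] //=; rewrite ltnS.
Qed.

Lemma des_word n (s : 'S_n) : des s = desw (word s).
Proof.
rewrite desw_nth size_word /des -sum1_card big_mkcond /= big_mkord.
apply: eq_bigr => i _; rewrite inE; congr nat_of_bool.
apply/existsP/andP => [[j /andP[/eqP Ej ltj]] | [Si_lt lt_i]].
  have Si_lt : i.+1 < n by rewrite -Ej ltn_ord.
  have Ej' : j = Ordinal Si_lt by apply: val_inj.
  by split=> //; rewrite -[i.+1]/(val (Ordinal Si_lt)) !nth_word -Ej'.
exists (Ordinal Si_lt); rewrite /= eqxx /=.
by move: lt_i; rewrite -[i.+1]/(val (Ordinal Si_lt)) !nth_word.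
Qed.

Lemma word_perm_iota n (s : 'S_n) : perm_eq (word s) (iota 0 n).
Proof.
apply: uniq_perm; rewrite ?iota_uniq //.
  by rewrite map_inj_uniq ?enum_uniq // => i j /val_inj/perm_inj.
move=> x; rewrite mem_iota add0n; apply/mapP/idP => [[i _ ->] | x_lt]; first exact: ltn_ord.
by exists ((s^-1)%g (Ordinal x_lt)); rewrite ?mem_enum // permKV.
Qed.

Lemma word_inj n : injective (@word n).
Proof. by move=> s1 s2 E; apply/permP => i; apply: val_inj => /=; rewrite -!nth_word E. Qed.

Lemma word_surj n (l : seq nat) : perm_eq l (iota 0 n) -> exists s : 'S_n, word s = l.
Proof.
move=> l_perm; have ul : uniq l by rewrite (perm_uniq l_perm) iota_uniq.
have sl : size l = n by rewrite (perm_size l_perm) size_iota.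
have l_lt (i : 'I_n) : nth 0 l i < n.
  have := @mem_nth _ 0 l i; rewrite (perm_mem l_perm) mem_iota sl add0n.
  by apply; apply: ltn_ord.
have f_inj : injective (fun i => Ordinal (l_lt i)).
  by move=> i j /(congr1 val) /= /eqP; rewrite nth_uniq ?sl // => /eqP/val_inj.
exists (perm f_inj); apply: (@eq_from_nth _ 0); rewrite size_word ?sl // => i i_lt.
by rewrite -[i]/(val (Ordinal i_lt)) nth_word permE.
Qed.

Lemma desw_cat_below (s t : seq nat) : 0 < size s -> 0 < size t -> below s t ->
  desw (s ++ t) = desw s + desw t.
Proof.
case: s => [|x s] // _; case: t => [|y t] // _ /belowP st.
by rewrite desw_cat //= ltnNge ltnW ?addn0 // st ?mem_last ?mem_head.
Qed.

Lemma desw_cat_above (s t : seq nat) : 0 < size s -> 0 < size t -> above s t ->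
  desw (s ++ t) = (desw s + desw t).+1.
Proof.
case: s => [|x s] // _; case: t => [|y t] // _ /belowP ts.
by rewrite desw_cat //= ts ?mem_last ?mem_head // addn1 addSn.
Qed.

Definition sepwords (P : pred (seq nat)) n :=
  [seq l <- permutations (iota 0 n) | separable l && P l].

Lemma mem_sepwords P n (l : seq nat) :
  (l \in sepwords P n) = [&& separable l, P l & perm_eq l (iota 0 n)].
Proof. by rewrite mem_filter mem_permutations andbA. Qed.

Lemma uniq_sepwords P n : uniq (sepwords P n).
Proof. exact/filter_uniq/permutations_uniq. Qed.

Lemma size_perm_iota n (l : seq nat) : perm_eq l (iota 0 n) -> size l = n.
Proof. by move/perm_size; rewrite size_iota. Qed.

Lemma mem_perm_iota n (l : seq nat) x : perm_eq l (iota 0 n) -> x \in l -> x < n.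
Proof. by move/perm_mem => ->; rewrite mem_iota. Qed.

Lemma indecomposable_below_above n (l : seq nat) : 1 < n ->
  perm_eq l (iota 0 n) -> separable l -> ~~ decomposable below l = decomposable above l.
Proof.
move=> n_gt1 l_perm sep; have ul : uniq l by rewrite (perm_uniq l_perm) iota_uniq.
have := separable_decomposable ul sep; rewrite (size_perm_iota l_perm) => /(_ n_gt1).
case/orP=> [db | da]; first by rewrite db (negbTE (decomposable_below_above db)).
by rewrite da (contraTN (@decomposable_below_above l) da).
Qed.

Lemma map_addn_subn k (u : seq nat) : all (leq k) u -> map (addn k) (map (subn^~ k) u) = u.
Proof. by move=> /allP u_ge; rewrite -map_comp map_id_in // => x /u_ge /= /subnKC. Qed.

Lemma below_iota_shift j (s t : seq nat) : perm_eq s (iota 0 j) -> below s (map (addn j) t).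
Proof.
by move=> s_perm; apply/belowP => x _ /(mem_perm_iota s_perm) x_lt /mapP[y _ ->]; rewrite ltn_addr.
Qed.

Lemma mem_sepwords_below n j (l : seq nat) : 0 < j < n ->
  (l \in sepwords (fun l => decomposable below l && (first_split below l == j)) n) =
  (l \in [seq s ++ map (addn j) t | s <- sepwords (predC (decomposable below)) j,
                                   t <- sepwords predT (n - j)]).
Proof.
move=> j_mid; rewrite mem_sepwords; apply/and3P/allpairsP => [[sep /andP[dl /eqP fj] l_perm] | ].
  have sl := size_perm_iota l_perm.
  have sA : size (take j l) = j by rewrite size_takel //; lia.
  have sB : size (drop j l) = n - j by rewrite size_drop sl.
  have Psu : below (take j l) (drop j l).
    have : decomposable below l && (first_split below l == j) by rewrite dl fj eqxx.
    by rewrite decomposable_first_split ?sl // => /andP[].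
  have ul : uniq l by rewrite (perm_uniq l_perm) iota_uniq.
  have u_ge : all (leq j) (drop j l) by rewrite -{1}sA below_size // take_uniq.
  set s := take j l in sA Psu *; set u := drop j l in sB Psu u_ge *.
  set t := map (subn^~ j) u.
  have El : l = s ++ map (addn j) t by rewrite map_addn_subn // cat_take_drop.
  have st : size t = n - j by rewrite size_map.
  have [s_perm t_perm] : perm_eq s (iota 0 j) /\ perm_eq t (iota 0 (n - j)).
    by apply/andP; rewrite -{1}sA -st -perm_iota_glue sA st subnKC -?El //; lia.
  have [sep_s sep_t] : separable s /\ separable t.
    by apply/andP; rewrite -(separable_shift j t) -separable_cat_below -?El // map_addn_subn.
  have ind_s : ~~ decomposable below s.
    rewrite -(first_split_cat below_catr_split (t := u)) ?cat_take_drop ?sA ?sB;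
      by rewrite ?dl ?fj ?eqxx //; lia.
  by exists (s, t); rewrite !mem_sepwords /= sep_s ind_s s_perm sep_t t_perm.
case=> -[s t] /= [sS tT ->]; rewrite !mem_sepwords /= in sS tT.
case/and3P: sS => sep_s ind_s s_perm; case/andP: tT => sep_t t_perm.
have sj := size_perm_iota s_perm; have st := size_perm_iota t_perm.
have Pst := below_iota_shift t s_perm.
split; first by rewrite separable_cat_below // sep_s separable_shift.
  by rewrite -[X in _ == X]sj (first_split_cat below_catr_split) ?size_map ?sj ?st //; lia.
rewrite -{1}sj -[n](subnKC (ltnW (proj2 (andP j_mid)))) -{1}sj -st.
by rewrite perm_iota_glue sj st s_perm.
Qed.

Lemma mem_sepwords_above n j (l : seq nat) : 0 < j < n ->
  (l \in sepwords (fun l => decomposable above l && (first_split above l == j)) n) =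
  (l \in [seq map (addn (n - j)) s ++ t | s <- sepwords (predC (decomposable above)) j,
                                         t <- sepwords predT (n - j)]).
Proof.
move=> j_mid; have n_split : (n - j) + j = n by rewrite subnK //; lia.
rewrite mem_sepwords; apply/and3P/allpairsP => [[sep /andP[dl /eqP fj] l_perm] | ].
  have sl := size_perm_iota l_perm.
  have sA : size (take j l) = j by rewrite size_takel //; lia.
  have sB : size (drop j l) = n - j by rewrite size_drop sl.
  have Psu : above (take j l) (drop j l).
    have : decomposable above l && (first_split above l == j) by rewrite dl fj eqxx.
    by rewrite decomposable_first_split ?sl // => /andP[].
  have ul : uniq l by rewrite (perm_uniq l_perm) iota_uniq.
  have s_ge : all (leq (n - j)) (take j l) by rewrite -sB below_size // drop_uniq.
  set s' := take j l in sA Psu s_ge *; set t := drop j l in sB Psu *.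
  set s := map (subn^~ (n - j)) s'.
  have El : l = map (addn (n - j)) s ++ t by rewrite map_addn_subn // cat_take_drop.
  have ss : size s = j by rewrite size_map.
  have [t_perm s_perm] : perm_eq t (iota 0 (n - j)) /\ perm_eq s (iota 0 j).
    apply/andP; rewrite -{1}sB -ss -perm_iota_glue sB ss n_split.
    by rewrite perm_catC -El.
  have [sep_s sep_t] : separable s /\ separable t.
    apply/andP; rewrite -(separable_shift (n - j) s) -separable_cat_above -?El //.
    by rewrite map_addn_subn.
  have ind_s : ~~ decomposable above s.
    have : ~~ decomposable above s'.
      rewrite -(first_split_cat above_catr_split (t := t)) ?cat_take_drop ?sA ?sB;
        by rewrite ?dl ?fj ?eqxx //; lia.
    by rewrite -(map_addn_subn s_ge) decomposable_map // => A B; apply: below_shift.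
  by exists (s, t); rewrite !mem_sepwords /= sep_s ind_s s_perm sep_t t_perm.
case=> -[s t] /= [sS tT ->]; rewrite !mem_sepwords /= in sS tT.
case/and3P: sS => sep_s ind_s s_perm; case/andP: tT => sep_t t_perm.
have ss := size_perm_iota s_perm; have st := size_perm_iota t_perm.
have Pst : above (map (addn (n - j)) s) t := below_iota_shift s t_perm.
split; first by rewrite separable_cat_above // separable_shift sep_s.
  rewrite -[X in _ == X]ss -(size_map (addn (n - j))) (first_split_cat above_catr_split);
    rewrite ?size_map ?ss ?st //; try lia.
  by rewrite decomposable_map // => A B; apply: below_shift.
rewrite perm_catC -{1}st; have -> : n = size t + size s by rewrite ss st.
by rewrite perm_iota_glue st ss t_perm s_perm.
Qed.

Lemma perm_sepwords_below n j : 0 < j < n ->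
  perm_eq (sepwords (fun l => decomposable below l && (first_split below l == j)) n)
    [seq s ++ map (addn j) t | s <- sepwords (predC (decomposable below)) j,
                              t <- sepwords predT (n - j)].
Proof.
move=> j_mid; apply: uniq_perm; rewrite ?uniq_sepwords //; last first.
  by move=> l; apply: mem_sepwords_below.
apply: allpairs_uniq; rewrite ?uniq_sepwords // => -[s1 t1] [s2 t2] /=.
move=> /allpairsP[[? ?] /= [s1S _ [-> ->]]] /allpairsP[[? ?] /= [s2S _ [-> ->]]].
rewrite !mem_sepwords in s1S s2S; case/and3P: s1S => _ _ /size_perm_iota s1j.
case/and3P: s2S => _ _ /size_perm_iota s2j.
by move/eqP; rewrite eqseq_cat ?s1j ?s2j // => /andP[/eqP-> /eqP/(inj_map (@addnI j))->].
Qed.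

Lemma perm_sepwords_above n j : 0 < j < n ->
  perm_eq (sepwords (fun l => decomposable above l && (first_split above l == j)) n)
    [seq map (addn (n - j)) s ++ t | s <- sepwords (predC (decomposable above)) j,
                                    t <- sepwords predT (n - j)].
Proof.
move=> j_mid; apply: uniq_perm; rewrite ?uniq_sepwords //; last first.
  by move=> l; apply: mem_sepwords_above.
apply: allpairs_uniq; rewrite ?uniq_sepwords // => -[s1 t1] [s2 t2] /=.
move=> /allpairsP[[? ?] /= [s1S _ [-> ->]]] /allpairsP[[? ?] /= [s2S _ [-> ->]]].
rewrite !mem_sepwords in s1S s2S; case/and3P: s1S => _ _ /size_perm_iota s1j.
case/and3P: s2S => _ _ /size_perm_iota s2j.
move/eqP; rewrite eqseq_cat ?size_map ?s1j ?s2j //.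
by case/andP=> /eqP/(inj_map (@addnI _))-> /eqP->.
Qed.

Import GRing.Theory.
Local Open Scope ring_scope.

Lemma sum_partition_seq (I : eqType) (V : nmodType) (r : seq I) (P : pred I)
    (k : I -> nat) (js : seq nat) (F : I -> V) :
  uniq js -> (forall x, x \in r -> P x -> k x \in js) ->
  \sum_(x <- r | P x) F x = \sum_(j <- js) \sum_(x <- r | P x && (k x == j)) F x.
Proof.
move=> ujs kjs; under [RHS]eq_bigr do rewrite big_mkcond.
rewrite exchange_big [LHS]big_mkcond big_seq [RHS]big_seq; apply: eq_bigr => x xr.
case Px: (P x) => /=; last by rewrite big1.
rewrite (bigD1_seq (k x)) ?kjs //= eqxx big1 ?addr0 // => j.
by rewrite eq_sym => /negbTE ->.
Qed.

Definition sepsum (P : pred (seq nat)) n : {poly int} := \sum_(l <- sepwords P n) 'X ^+ desw l.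

Lemma sepsum_first_split_below n j : (0 < j < n)%N ->
  sepsum (fun l => decomposable below l && (first_split below l == j)) n =
  sepsum (predC (decomposable below)) j * sepsum predT (n - j).
Proof.
move=> j_mid; rewrite /sepsum (perm_big _ (perm_sepwords_below j_mid)) big_allpairs_dep big_distrl.
apply: eq_big_seq => s; rewrite mem_sepwords big_distrr => /and3P[_ _ s_perm].
apply: eq_big_seq => t; rewrite mem_sepwords => /and3P[_ _ t_perm].
rewrite desw_cat_below ?below_iota_shift ?desw_shift ?exprD // ?size_map.
  by rewrite (size_perm_iota s_perm); case/andP: j_mid.
by rewrite (size_perm_iota t_perm) subn_gt0; case/andP: j_mid.
Qed.

Lemma sepsum_first_split_above n j : (0 < j < n)%N ->
  sepsum (fun l => decomposable above l && (first_split above l == j)) n =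
  'X * (sepsum (predC (decomposable above)) j * sepsum predT (n - j)).
Proof.
move=> j_mid; rewrite /sepsum (perm_big _ (perm_sepwords_above j_mid)) big_allpairs_dep big_distrl.
rewrite big_distrr; apply: eq_big_seq => s; rewrite mem_sepwords big_distrr big_distrr.
move=> /and3P[_ _ s_perm]; apply: eq_big_seq => t; rewrite mem_sepwords => /and3P[_ _ t_perm].
rewrite desw_cat_above ?desw_shift; first by rewrite exprS exprD.
- by rewrite size_map (size_perm_iota s_perm); case/andP: j_mid.
- by rewrite (size_perm_iota t_perm) subn_gt0; case/andP: j_mid.
- exact: below_iota_shift.
Qed.

Lemma sepsum_decomposable_below n :
  sepsum (decomposable below) n =
  \sum_(1 <= j < n) sepsum (predC (decomposable below)) j * sepsum predT (n - j).
Proof.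
rewrite {1}/sepsum big_filter (sum_partition_seq (k := first_split below) (js := index_iota 1 n)).
- apply: eq_big_seq => j; rewrite mem_index_iota => j_mid.
  by rewrite -sepsum_first_split_below // /sepsum big_filter; apply: eq_bigl => l; rewrite andbA.
- exact: iota_uniq.
move=> l; rewrite mem_permutations mem_index_iota => l_perm /andP[_].
by move/first_split_bounds; rewrite (size_perm_iota l_perm).
Qed.

Lemma sepsum_decomposable_above n :
  sepsum (decomposable above) n =
  'X * \sum_(1 <= j < n) sepsum (predC (decomposable above)) j * sepsum predT (n - j).
Proof.
rewrite {1}/sepsum big_filter (sum_partition_seq (k := first_split above) (js := index_iota 1 n)).
- rewrite mulr_sumr; apply: eq_big_seq => j; rewrite mem_index_iota => j_mid.
  by rewrite -sepsum_first_split_above // /sepsum big_filter; apply: eq_bigl => l; rewrite andbA.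
- exact: iota_uniq.
move=> l; rewrite mem_permutations mem_index_iota => l_perm /andP[_].
by move/first_split_bounds; rewrite (size_perm_iota l_perm).
Qed.

Lemma sepsum_eq_in (P Q : pred (seq nat)) n :
  (forall l, perm_eq l (iota 0 n) -> separable l -> P l = Q l) -> sepsum P n = sepsum Q n.
Proof.
move=> PQ; rewrite /sepsum /sepwords (@eq_in_filter _ _ (fun l => separable l && Q l)) //.
by move=> l; rewrite mem_permutations => l_perm; case sep: (separable l); rewrite //= PQ.
Qed.

Lemma sepsumID (P : pred (seq nat)) n : sepsum predT n = sepsum P n + sepsum (predC P) n.
Proof.
by rewrite /sepsum !big_filter (bigID P) /=; congr (_ + _); apply: eq_bigl => l;
  rewrite andbT.
Qed.

Lemma sepsum1 (P : pred (seq nat)) : P [:: 0%N] -> sepsum P 1 = 1.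
Proof. by move=> P0; rewrite /sepsum /sepwords /= separable_small // P0 big_seq1. Qed.

(** * Di-sk trees *)

Lemma trees_fuel_eq f f' k : (k <= f)%N -> (k <= f')%N -> trees_fuel f k = trees_fuel f' k.
Proof.
elim: f f' k => [|f IH] [|f'] [|k] // k_le k_le'.
rewrite [LHS]/trees_fuel -/trees_fuel [RHS]/trees_fuel -/trees_fuel; congr flatten.
apply/eq_in_map => i; rewrite mem_iota => /andP[_ i_lt].
by rewrite (IH f' i) ?(IH f' (k - i)%N) //; lia.
Qed.

Lemma sum_trees (F : btree -> {poly int}) k :
  \sum_(T <- trees_of_size k.+1) F T =
  \sum_(i < k.+1) \sum_(L <- trees_of_size i) \sum_(R <- trees_of_size (k - i))
      (F (Node true L R) + F (Node false L R)).
Proof.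
rewrite /trees_of_size [trees_fuel k.+1 _]/trees_fuel -/trees_fuel.
rewrite big_flatten big_map -[iota 0 k.+1]/(index_iota 0 k.+1) big_mkord.
apply: eq_bigr => i _; have i_lt := ltn_ord i.
rewrite (@trees_fuel_eq k i i) ?(@trees_fuel_eq k (k - i)%N (k - i)%N); try lia.
rewrite big_flatten /= big_map; apply: eq_bigr => L _.
by rewrite big_flatten /= big_map; apply: eq_bigr => R _; rewrite !big_cons big_nil addr0.
Qed.

Definition disk_sum k : {poly int} := \sum_(T <- trees_of_size k | disk T) 'X ^+ nminus T.

Lemma Stree_SS b m : Stree b m.+2 =
  \sum_(T <- trees_of_size m.+1 | disk T && (root_label T == Some b)) 'X ^+ nminus T.
Proof. by []. Qed.

Lemma sum_right_subtrees b m :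
  \sum_(R <- trees_of_size m | disk R && (if R is Node b' _ _ then b' != b else true))
     'X ^+ nminus R = Stree (~~ b) m.+1.
Proof.
case: m => [|m]; first by rewrite /Stree /= big_cons big_nil /= expr0 addr0.
rewrite Stree_SS !(big_mkcond (fun T => _ && _)) !sum_trees.
by apply: eq_bigr => i _; apply: eq_bigr => L _; apply: eq_bigr => R _; case: b.
Qed.

Lemma disk_sum0 : disk_sum 0 = 1.
Proof. by rewrite /disk_sum /= big_cons big_nil /= expr0 addr0. Qed.

Lemma disk_sum_root k : disk_sum k.+1 = S1 k.+2 + S2 k.+2.
Proof.
rewrite /disk_sum /S1 /S2 !Stree_SS !(big_mkcond (fun T => _ && _)) [LHS]big_mkcond.
rewrite !sum_trees -big_split; apply: eq_bigr => i _.
rewrite -big_split; apply: eq_bigr => L _; rewrite -big_split; apply: eq_bigr => R _ /=.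
by case: (disk L); case: (disk R); case: R => [|[] ? ?] /=; rewrite ?(addr0, add0r).
Qed.

Lemma S1_rec k : S1 k.+2 = \sum_(i < k.+1) disk_sum i * S2 (k - i).+1.
Proof.
rewrite /S1 Stree_SS (big_mkcond (fun T => _ && _)) sum_trees.
apply: eq_bigr => i _; rewrite /S2 -(sum_right_subtrees true) /disk_sum big_distrl [RHS]big_mkcond.
apply: eq_bigr => L _; case HL: (disk L); last by rewrite big1 // => R _ /=; rewrite HL /= addr0.
rewrite big_distrr [RHS]big_mkcond; apply: eq_bigr => R _ /=.
rewrite HL /=.
by case: (disk R); case: R => [|[] ? ?]; rewrite /= ?add0n ?addr0 ?exprD.
Qed.

Lemma S2_rec k : S2 k.+2 = 'X * \sum_(i < k.+1) disk_sum i * S1 (k - i).+1.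
Proof.
rewrite /S2 Stree_SS (big_mkcond (fun T => _ && _)) sum_trees mulr_sumr.
apply: eq_bigr => i _; rewrite /S1 -(sum_right_subtrees false) /disk_sum big_distrl mulr_sumr.
rewrite [RHS]big_mkcond; apply: eq_bigr => L _; case HL: (disk L); last first.
  by rewrite big1 ?mulr0 // => R _ /=; rewrite HL /= addr0.
rewrite big_distrr mulr_sumr [RHS]big_mkcond; apply: eq_bigr => R _ /=.
rewrite HL /=.
by case: (disk R); case: R => [|[] ? ?]; rewrite /= ?add0r ?mulr0 // !exprD expr1 !mulrA.
Qed.

Lemma Sperm_sepsum n : Sperm n = sepsum predT n.
Proof.
transitivity (\sum_(s <- enum 'S_n | avoids_2413_3142 s) ('X ^+ des s : {poly int})).
  by rewrite big_enum_cond.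
under eq_bigr do rewrite des_word; under eq_bigl do rewrite separable_word.
rewrite -(big_map (@word n) separable (fun l => 'X ^+ desw l)) /sepsum big_filter.
under [RHS]eq_bigl do rewrite andbT.
apply: perm_big; apply: uniq_perm.
- by rewrite (map_inj_uniq (@word_inj n)) enum_uniq.
- exact: permutations_uniq.
move=> l; rewrite mem_permutations; apply/mapP/idP => [[s _ ->] | /word_surj[s <-]].
  exact: word_perm_iota.
by exists s; rewrite ?mem_enum.
Qed.

Lemma sum_shift1 (F : nat -> {poly int}) k :
  \sum_(1 <= j < k.+2) F j = \sum_(i < k.+1) F i.+1.
Proof. by rewrite big_add1 /= big_mkord. Qed.

Lemma sum_convolution_rev (A B : nat -> {poly int}) k :
  \sum_(1 <= j < k.+2) A j * B (k.+2 - j).-1 = \sum_(i < k.+1) B i * A (k - i).+1.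
Proof.
rewrite big_add1 /= big_nat_rev big_mkord; apply: eq_bigr => i _.
by rewrite mulrC; congr (B _ * A _); have := ltn_ord i; lia.
Qed.

Lemma sepsum_disk n : (0 < n)%N ->
  [/\ sepsum predT n = disk_sum n.-1,
      sepsum (predC (decomposable below)) n = S2 n &
      sepsum (predC (decomposable above)) n = S1 n].
Proof.
elim/ltn_ind: n => -[|[|k]] // IH _; first by rewrite !sepsum1 ?disk_sum0.
have IH_at j : (0 < j < k.+2)%N -> _ :=
  fun j_mid => IH j (proj2 (andP j_mid)) (proj1 (andP j_mid)).
have plus_rec : sepsum (decomposable below) k.+2 = S1 k.+2.
  rewrite sepsum_decomposable_below S1_rec -sum_convolution_rev.
  apply: eq_big_nat => j j_mid; have [_ -> _] := IH_at j j_mid.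
  by have [-> _ _] := IH_at (k.+2 - j)%N ltac:(lia).
have minus_rec : sepsum (decomposable above) k.+2 = S2 k.+2.
  rewrite sepsum_decomposable_above S2_rec -sum_convolution_rev; congr (_ * _).
  apply: eq_big_nat => j j_mid; have [_ _ ->] := IH_at j j_mid.
  by have [-> _ _] := IH_at (k.+2 - j)%N ltac:(lia).
(* Direct-sum-indecomposable words match di-sk trees with root labelled (-),
   skew-sum-indecomposable ones trees with root labelled (+). *)
have plus_ind : sepsum (predC (decomposable below)) k.+2 = S2 k.+2.
  by rewrite -minus_rec; apply: sepsum_eq_in => l; apply: indecomposable_below_above.
have minus_ind : sepsum (predC (decomposable above)) k.+2 = S1 k.+2.
  rewrite -plus_rec; apply: sepsum_eq_in => l l_perm sep /=.
  by rewrite -(indecomposable_below_above _ l_perm sep) ?negbK.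
by rewrite (sepsumID (decomposable below)) plus_rec plus_ind disk_sum_root.
Qed.

Theorem lemma5p9 (n : nat) : (2 <= n)%N ->
  S1 n = \sum_(1 <= j < n) Sperm j * S2 (n - j) /\
  S2 n = 'X * \sum_(1 <= j < n) Sperm j * S1 (n - j).
Proof.
case: n => [|[|k]] // _.
have Sperm_disk i : Sperm i.+1 = disk_sum i.
  by rewrite Sperm_sepsum; case: (sepsum_disk (ltn0Sn i)).
rewrite S1_rec S2_rec !sum_shift1; split; [|congr (_ * _)];
  by apply: eq_bigr => i _; rewrite Sperm_disk subSS subSn // -ltnS.
Qed.
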